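(* There exist an environment $E$ and a total preorder $\succeq$ on $\Pi^E$ such that $\succeq\in\mathrm{Ord}_{\mathrm{FPR}}(E)$ but $\succeq\notin\mathrm{Ord}_{\mathrm{GOMORL}}(E)$.
   Context: An environment is a tuple $E=(\mathcal S,\mathcal A,\mathcal T,\mathcal I)$ where $\mathcal S,\mathcal A$ are finite nonempty sets, $\mathcal T:\mathcal S\times\mathcal A\to\Delta(\mathcal S)$ and $\mathcal I\in\Delta(\mathcal S)$. A policy is a map $\pi:\mathcal S\to\Delta(\mathcal A)$ (stationary, possibly stochastic); $\Pi^E$ denotes the set of all policies. A trajectory $\xi=(s_0,a_0,s_1,a_1,\dots)$ is generated under $\pi$ by $s_0\sim\mathcal I$, $a_t\sim\pi(s_t)$, $s_{t+1}\sim\mathcal T(s_t,a_t)$; $\mathbb E^\pi_\xi$ denotes expectation under this distribution. An objective-specification formalism $X$ assigns to each environment $E$ a set of objective specifications, each inducing a total preorder $\succeq$ on $\Pi^E$; $\mathrm{Ord}_X(E)$ is the set of total preorders so induced. A specification defining a scalar $J:\Pi^E\to\mathbb R$ induces $\pi_1\succeq\pi_2\iff J(\pi_1)\ge J(\pi_2)$. FPR: specification $(J)$ with $J:\Pi^E\to\mathbb R$ an arbitrary function. GOMORL: specification $(k,\mathcal R,\gamma,\succeq_J)$ with $k\in\mathbb N$, $\mathcal R:\mathcal S\times\mathcal A\times\mathcal S\to\mathbb R^k$ with components $\mathcal R_i$, $\gamma\in[0,1)$, $\succeq_J$ a total preorder on $\mathbb R^k$; with $\vec J(\pi)=(J_1(\pi),\dots,J_k(\pi))$,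 $J_i(\pi)=\mathbb E^\pi_\xi[\sum_{t=0}^\infty\gamma^t\mathcal R_i(s_t,a_t,s_{t+1})]$, it induces $\pi_1\succeq\pi_2\iff\vec J(\pi_1)\succeq_J\vec J(\pi_2)$. *)

From HB Require Import structures.
From mathcomp Require Import all_boot all_order all_algebra.
From mathcomp Require Import all_classical all_reals.
From mathcomp Require Import topology normedtype sequences.
Set Implicit Arguments. Unset Strict Implicit. Unset Printing Implicit Defensive.
Import Order.TTheory GRing.Theory Num.Theory.
Import numFieldNormedType.Exports.
Local Open Scope ring_scope.

Section Defs.
Variable R : realType.

Definition is_distr (T : finType) (f : {ffun T -> R}) : bool :=
  [forall x, 0 <= f x] && (\sum_x f x == 1).
Definition distr (T : finType) := {f : {ffun T -> R} | is_distr f}.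
Definition dval (T : finType) (d : distr T) : T -> R := fun x => proj1_sig d x.

Record env := Env {
  St : finType;
  Ac : finType;
  St_inh : St;
  Ac_inh : Ac;
  trans : St -> Ac -> distr St;
  init : distr St }.

Definition policy (E : env) := St E -> distr (Ac E).

Definition state_dist (E : env) (pi : policy E) : nat -> St E -> R :=
  fix sd (t : nat) : St E -> R :=
  match t with
  | 0 => dval (init E)
  | t'.+1 => fun s' => \sum_s \sum_a
        sd t' s * dval (pi s) a * dval (trans s a) s'
  end.

Definition exp_step_reward (E : env) (pi : policy E)
    (r : St E -> Ac E -> St E -> R) (t : nat) : R :=
  \sum_s \sum_a \sum_s'
    state_dist pi t s * dval (pi s) a * dval (trans s a) s' * r s a s'.

(* E^pi [ sum_t gamma^t r(s_t,a_t,s_{t+1}) ]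
   = sum_t gamma^t E^pi[r(s_t,a_t,s_{t+1})]  (bounded rewards, gamma < 1) *)
Definition disc_return (E : env) (pi : policy E)
    (r : St E -> Ac E -> St E -> R) (gamma : R) : R :=
  limn (series (fun t => gamma ^+ t * exp_step_reward pi r t)).

Definition total_preorder (T : Type) (le : T -> T -> Prop) : Prop :=
  (forall x, le x x) /\
  (forall x y z, le x y -> le y z -> le x z) /\
  (forall x y, le x y \/ le y x).

Definition induced_by (T : Type) (J : T -> R) (le : T -> T -> Prop) : Prop :=
  forall x y, le x y <-> J x >= J y.

Definition in_Ord_FPR (E : env) (le : policy E -> policy E -> Prop) : Prop :=
  exists J : policy E -> R, induced_by J le.

Definition in_Ord_GOMORL (E : env) (le : policy E -> policy E -> Prop) : Prop :=
  exists (k : nat) (rw : 'I_k -> St E -> Ac E -> St E -> R) (gamma : R)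
         (leJ : 'rV[R]_k -> 'rV[R]_k -> Prop),
    0 <= gamma < 1 /\ total_preorder leJ /\
    forall p q, le p q <->
      leJ (\row_i disc_return p (rw i) gamma) (\row_i disc_return q (rw i) gamma).

End Defs.

(** Policies that agree on every state the agent can actually reach induce the
    same state–action occupancies, hence the same expected discounted return
    for every reward function and discount; so every GOMORL order makes them
    equivalent.  An arbitrary function of the policy, however, may look at the
    action chosen in an unreachable state.  In an environment with states and
    actions [bool] that always moves to [true] and starts there, the policies
    "always play [true]" and "play the current state" differ only in the
    unreachable state [false], and [J pi := pi(false)(true)] separates them. *)

From mathcomp Require Import all_boot all_order all_algebra.
From mathcomp Require Import all_classical all_reals.
Set Implicit Arguments. Unset Strict Implicit. Unset Printing Implicit Defensive.
Import Order.TTheory GRing.Theory Num.Theory.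
Local Open Scope ring_scope.

Section ReachableAgreement.
Variables (R : realType) (E : env R) (p q : policy E).
Hypothesis agree_on_reachable :
  forall t s, state_dist p t s != 0 -> p s = q s.

Lemma occupancy_agree t s a :
  state_dist p t s = state_dist q t s ->
  state_dist p t s * dval (p s) a = state_dist q t s * dval (q s) a.
Proof.
move=> sd_pq; have [sd0|/agree_on_reachable ->] := eqVneq (state_dist p t s) 0.
  by rewrite -sd_pq sd0 !mul0r.
by rewrite sd_pq.
Qed.

Lemma state_dist_agree t s : state_dist p t s = state_dist q t s.
Proof.
elim: t s => [|t IH] s' //=.
by apply: eq_bigr => s _; apply: eq_bigr => a _; rewrite occupancy_agree.
Qed.

Lemma exp_step_reward_agree r t : exp_step_reward p r t = exp_step_reward q r t.
Proof.
apply: eq_bigr => s _; apply: eq_bigr => a _; apply: eq_bigr => s' _.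
by rewrite occupancy_agree // state_dist_agree.
Qed.

Lemma disc_return_agree r gamma : disc_return p r gamma = disc_return q r gamma.
Proof.
by rewrite /disc_return; under eq_fun => t do rewrite exp_step_reward_agree.
Qed.

End ReachableAgreement.

Section Orders.
Variable R : realType.

Lemma total_preorder_ge_comp (T : Type) (J : T -> R) :
  total_preorder (fun x y => J y <= J x).
Proof.
split; first by move=> x.
split; first by move=> x y z yx zy; apply: le_trans zy yx.
by move=> x y; apply/orP; rewrite le_total.
Qed.

Lemma in_Ord_GOMORL_same_returns (E : env R) (le : policy E -> policy E -> Prop)
    (p q : policy E) :
  in_Ord_GOMORL le ->
  (forall r gamma, disc_return p r gamma = disc_return q r gamma) -> le p q.
Proof.
move=> [k [rw [gamma [leJ [_ [[leJ_refl _] le_iff]]]]]] same_returns.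
apply/le_iff; have -> : \row_i disc_return p (rw i) gamma =
                        \row_i disc_return q (rw i) gamma.
  by apply/rowP => i; rewrite !mxE same_returns.
exact: leJ_refl.
Qed.

End Orders.

Section UnreachableState.
Variable R : realType.

Lemma is_distr_dirac (T : finType) (x : T) : is_distr [ffun y => (y == x)%:R : R].
Proof.
apply/andP; split; first by apply/forallP => y; rewrite ffunE ler0n.
rewrite (bigD1 x) //= big1 => [|y /negbTE yx]; last by rewrite ffunE yx.
by rewrite ffunE eqxx addr0.
Qed.

Definition dirac (T : finType) (x : T) : distr R T :=
  exist (@is_distr R T) _ (is_distr_dirac x).

Lemma dval_dirac (T : finType) (x y : T) : dval (dirac x) y = (y == x)%:R.
Proof. by rewrite /dval ffunE. Qed.

Definition stuck_env : env R :=
  @Env R bool bool true true (fun _ _ => dirac true) (dirac true).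

Lemma state_dist_stuck_false (pi : policy stuck_env) t : state_dist pi t false = 0.
Proof.
case: t => [|t] /=; first by rewrite dval_dirac.
by rewrite big1 // => s _; rewrite big1 // => a _; rewrite dval_dirac mulr0.
Qed.

Definition play_true : policy stuck_env := fun _ => dirac true.
Definition play_state : policy stuck_env := fun s => dirac s.
Definition choice_in_false (pi : policy stuck_env) : R := dval (pi false) true.

Lemma disc_return_play_state_true r gamma :
  disc_return play_state r gamma = disc_return play_true r gamma.
Proof.
apply: disc_return_agree => t [] //.
by rewrite state_dist_stuck_false eqxx.
Qed.

End UnreachableState.

Theorem mainTheorem16 (R : realType) :
  exists (E : env R) (le : policy E -> policy E -> Prop),
    total_preorder le /\ in_Ord_FPR le /\ ~ in_Ord_GOMORL le.
Proof.
exists (stuck_env R), (fun x y => choice_in_false y <= choice_in_false x).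
split; first exact: total_preorder_ge_comp.
split; first by exists (@choice_in_false R).
move=> /in_Ord_GOMORL_same_returns gomorl.
have := gomorl _ _ (@disc_return_play_state_true R).
by rewrite /choice_in_false !dval_dirac ler10.
Qed.
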